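(* Let $\delta_j,\delta_k$ be coprime integers with $1<\delta_j<\delta_k$, and let $(x_k,x_j)$ be a B\'ezout couple for $(\delta_k,\delta_j)$ associated to $i=x_k\delta_k+x_j\delta_j$ with $i\le\delta_j$. Then $\big(\lfloor\delta_k/\delta_j\rfloor x_k+x_j,\ x_k\big)$ is a B\'ezout couple for $(\delta_j,\ \delta_k\bmod\delta_j)$.
   Context: For coprime positive integers $p,q$, a B\'ezout couple for $(p,q)$ associated to $i\in\{1,\ldots,\max\{p,q\}\}$ is a pair $(x,y)\in\mathbb Z^2$ with $xp+yq=i$ and either $0<y\le p$ (the $\lambda$-B\'ezout couple of $i$, unique) or $0<x\le q$ (the $\mu$-B\'ezout couple of $i$, unique). Note $\delta_k\bmod\delta_j\ge1$ is coprime to $\delta_j$. *)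

From mathcomp Require Import all_boot all_order all_algebra.
Set Implicit Arguments. Unset Strict Implicit. Unset Printing Implicit Defensive.
Import Order.TTheory GRing.Theory Num.Theory.
Local Open Scope ring_scope.

Definition bezout_couple (p q i : nat) (x y : int) : Prop :=
  [/\ [&& (0 < p)%N, (0 < q)%N & coprime p q],
      (1 <= i <= maxn p q)%N,
      x * p%:Z + y * q%:Z = i%:Z
    & (((0 < y) && (y <= p%:Z)) \/ ((0 < x) && (x <= q%:Z)))].

From mathcomp Require Import all_boot all_order all_algebra.
From mathcomp Require Import zify ring.
Import Order.TTheory GRing.Theory Num.Theory.
Local Open Scope ring_scope.

(* Write dk = q dj + r.  Then i = (q xk + xj) dj + xk r, so only the bound
   conditions need checking.  A mu-couple (0 < xk <= dj) stays a
   lambda-couple.  For a lambda-couple (0 < xj <= dk), the smallness of i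
   forces -dj < xk <= 0, and then (q xk + xj) dj = i - xk r lies in
   (0, (r + 1) dj), which makes the new couple a mu-couple. *)

Lemma modn_coprime_gt0 {m n : nat} : coprime m n -> (1 < m)%N -> (0 < n %% m)%N.
Proof.
move=> cop m_gt1; rewrite lt0n; apply: contraTneq cop => nm0.
by rewrite /coprime -gcdn_modr nm0 gcdn0; lia.
Qed.

Lemma bezout_lambda_coef_bounds {K D i x y : int} :
  x * K + y * D = i -> 1 <= i <= D -> 0 < y <= K -> - D < x <= 0.
Proof.
move=> def_i /andP[i_ge1 i_leD] /andP[y_gt0 y_leK].
have K_gt0 : 0 < K by lia.
have xK_le0 : x * K <= 0 by nia.
have xK_gt : - D * K < x * K by nia.
by apply/andP; split; [rewrite -(ltr_pM2r K_gt0) | rewrite -(ler_pM2r K_gt0) mul0r].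
Qed.

Lemma bezout_remainder_coef_bounds {D R i x u : int} :
  0 < R -> u * D + x * R = i -> 1 <= i <= D -> - D < x <= 0 -> 0 < u <= R.
Proof.
move=> R_gt0 def_i /andP[i_ge1 i_leD] /andP[x_gtN x_le0].
have D_gt0 : 0 < D by lia.
have uD_gt0 : 0 < u * D by nia.
have uD_lt : u * D < (R + 1) * D by nia.
apply/andP; split; first by rewrite -(ltr_pM2r D_gt0) mul0r.
by rewrite -ltzD1 -(ltr_pM2r D_gt0).
Qed.

Theorem lemma3p1 (dj dk : nat) (xk xj : int) (i : nat) :
  coprime dj dk -> (1 < dj)%N -> (dj < dk)%N ->
  bezout_couple dk dj i xk xj -> (i <= dj)%N ->
  bezout_couple dj (dk %% dj) i ((dk %/ dj)%:Z * xk + xj) xk.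
Proof.
move=> cop dj_gt1 _ [_ /andP[i_gt0 _] def_i couple] i_le_dj.
have r_gt0 := modn_coprime_gt0 cop dj_gt1.
have r_lt_dj : (dk %% dj < dj)%N by rewrite ltn_mod; lia.
have def_i' : ((dk %/ dj)%:Z * xk + xj) * dj%:Z + xk * (dk %% dj)%:Z = i%:Z.
  by rewrite -def_i {3}(divn_eq dk dj) PoszD PoszM; ring.
have i_range : 1 <= i%:Z <= dj%:Z by lia.
split=> //.
- by rewrite r_gt0 /coprime gcdn_modr; apply/andP; split; lia.
- by rewrite (maxn_idPl (ltnW r_lt_dj)) i_gt0 i_le_dj.
case: couple => [xj_range | xk_range]; last by left.
have xk_bounds := bezout_lambda_coef_bounds def_i i_range xj_range.
right; apply: (bezout_remainder_coef_bounds _ def_i' i_range xk_bounds); lia.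
Qed.
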